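(* Let $\alpha,t,n$ be positive integers and let $\mathcal{C}_W$ be a binary $t$-write WOM code on $n$ cells with encoders $\mathcal{E}^W_1,\ldots,\mathcal{E}^W_t$ and sum-rate $R_{\mathrm{sum}}$. Define the code $\mathcal{C}_{\alpha,1,1}$ on $n$ cells, starting from $\mathbf{c}_0=\mathbf{0}$, as follows: for the $i$-th write ($i\ge1$) let $i'=i\bmod 2(t+\alpha)\in\{1,\ldots,2(t+\alpha)\}$ and let $\mathbf{c}_i$ be the state after the $i$-th write. If $i'\in[1:t]$, a message $M\in[1:2^{nR_{i'}}]$ is written by $\mathbf{c}_i=\mathcal{E}^W_{i'}(M,\mathbf{c}_{i-1})$; if $i'=t+1$, no information is written and $\mathbf{c}_i=\mathbf{1}$ (all-one vector); if $i'\in[t+2:t+\alpha]$, no information is written and $\mathbf{c}_i=\mathbf{c}_{i-1}$; if $i'\in[t+\alpha+1:2t+\alpha]$, a message $M\in[1:2^{nR_{i'-t-\alpha}}]$ is written by $\mathbf{c}_i=\overline{\mathcal{E}^W_{i'-t-\alpha}(M,\overline{\mathbf{c}_{i-1}})}$; if $i'=2t+\alpha+1$, no information is written and $\mathbf{c}_i=\mathbf{0}$; if $i'\in[2t+\alpha+2:2(t+\alpha)]$, no information is written and $\mathbf{c}_i=\mathbf{c}_{i-1}$. Then $\mathcal{C}_{\alpha,1,1}$ is an $(\alpha,1,1)$-constrained code, and if $R_{\mathrm{sum}}=\log_2(t+1)$ (i.e. $\mathcal{C}_W$ is sum-rate optimal), then the rate of $\mathcal{C}_{\alpha,1,1}$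 is $\frac{\log_2(t+1)}{t+\alpha}$.
   Context: Convention: $x\bmod y$ is taken in $\{1,\ldots,y\}$; $[a:b]=\{a,\ldots,b\}$; $[1:2^{nR}]=\{1,\ldots,\lfloor2^{nR}\rfloor\}$; $\overline{\mathbf{u}}$ is the bitwise complement. A binary $t$-write WOM (write-once memory) code $[n,t;2^{nR_1},\ldots,2^{nR_t}]$ consists of encoders $\mathcal{E}^W_j:[1:2^{nR_j}]\times\{0,1\}^n\to\{0,1\}^n$ and decoders $\mathcal{D}^W_j:\{0,1\}^n\to[1:2^{nR_j}]$, $j=1,\ldots,t$, such that $\mathbf{c}\le\mathcal{E}^W_j(m,\mathbf{c})$ componentwise (cells only change from 0 to 1) and $\mathcal{D}^W_j(\mathcal{E}^W_j(m,\mathbf{c}))=m$; its sum-rate is $R_{\mathrm{sum}}=\sum_{j=1}^tR_j$. A code on $n$ binary cells consists, for each write $i\ge1$, of a real $R_i\ge0$, an encoder $\mathcal{E}_i:[1:2^{nR_i}]\times\{0,1\}^n\to\{0,1\}^n$ and decoder $\mathcal{D}_i$ with $\mathcal{D}_i(\mathcal{E}_i(m,\mathbf{u}))=m$ (both may depend on $i$; writes with no information have one message, $R_i=0$). Starting from the zero state, messages produce states $\mathbf{v}_i$. The code is $(\alpha,\beta,p)$-constrained if for every message sequence, every $i\ge0$ and every $1\le j\le n-\beta+1$, $|\{(k,\ell): v_{i+k,j+\ell}\ne v_{i+k+1,j+\ell}, 0\le k<\alpha, 0\le\ell<\beta\}|\le p$. Rate: $\lim_{m\to\infty}\frac1m\sum_{i=1}^mR_i$.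 *)

From Stdlib Require Import Reals ZArith.
From mathcomp Require Import all_boot.

Set Implicit Arguments.
Unset Strict Implicit.
Unset Printing Implicit Defensive.

(* States of n binary cells; cell k (0-based) of the paper's cell k+1. *)
Definition cells (n : nat) := {ffun 'I_n -> bool}.

Definition zeros n : cells n := [ffun=> false].
Definition ones n : cells n := [ffun=> true].
Definition compl n (c : cells n) : cells n := [ffun k => ~~ c k].
Definition cle n (c c' : cells n) : bool := [forall k, c k ==> c' k].

(* value of cell k (0-based), false outside range *)
Definition cellat n (c : cells n) (k : nat) : bool :=
  match insub k with Some o => c o | None => false end.

(* number of messages floor(2^{nR}) : [1:2^{nR}] = {1,...,msize n R} *)
Definition msize (n : nat) (r : R) : nat :=
  Z.to_nat (Int_part (Rpower (IZR 2) (Rmult (INR n) r))).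

Fixpoint psum (f : nat -> R) (m : nat) : R :=
  match m with O => R0 | S m' => Rplus (psum f m') (f (S m')) end.

Definition log2 (x : R) : R := Rdiv (ln x) (ln (IZR 2)).

Record WOM (n t : nat) := MkWOM {
  wR : nat -> R;
  wE : nat -> nat -> cells n -> cells n;
  wD : nat -> cells n -> nat
}.

(* states in which the j-th write may occur: reachable by writes 1..j-1 *)
Inductive wom_reach n t (W : WOM n t) : nat -> cells n -> Prop :=
| wr_init : wom_reach W 1 (zeros n)
| wr_step j c m : (1 <= j <= t)%N -> (1 <= m <= msize n (wR W j))%N ->
    wom_reach W j c -> wom_reach W j.+1 (wE W j m c).

Definition is_WOM n t (W : WOM n t) : Prop :=
  (forall j, (1 <= j <= t)%N -> Rle R0 (wR W j)) /\
  (forall j c m, (1 <= j <= t)%N -> wom_reach W j c ->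
     (1 <= m <= msize n (wR W j))%N ->
     cle c (wE W j m c) /\ wD W j (wE W j m c) = m).

Definition wom_sumrate n t (W : WOM n t) : R := psum (wR W) t.

Record code (n : nat) := MkCode {
  cR : nat -> R;
  cE : nat -> nat -> cells n -> cells n;
  cD : nat -> cells n -> nat
}.

Definition valid_msgs n (K : code n) (ms : nat -> nat) : Prop :=
  forall i, (1 <= i)%N -> (1 <= ms i <= msize n (cR K i))%N.

Fixpoint states n (K : code n) (ms : nat -> nat) (i : nat) : cells n :=
  match i with
  | O => zeros n
  | S i' => cE K i (ms i) (states K ms i')
  end.

Definition is_code n (K : code n) : Prop :=
  (forall i, (1 <= i)%N -> Rle R0 (cR K i)) /\
  (forall ms, valid_msgs K ms -> forall i, (1 <= i)%N ->
     cD K i (states K ms i) = ms i).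

(* (alpha,beta,p)-constrained; window start j is 0-based: 0 <= j <= n - beta *)
Definition constrained n (K : code n) (alpha beta p : nat) : Prop :=
  forall ms, valid_msgs K ms -> forall i j, (j + beta <= n)%N ->
    (\sum_(k < alpha) \sum_(l < beta)
        (cellat (states K ms (i + k)) (j + l)
           != cellat (states K ms (i + k).+1) (j + l)) <= p)%N.

Definition code_rate n (K : code n) (L : R) : Prop :=
  Un_cv (fun m => Rdiv (psum (cR K) m) (INR m)) L.

(* i' = i mod 2(t+alpha), taken in {1,...,2(t+alpha)} *)
Definition phase (t alpha i : nat) : nat := ((i - 1) %% (2 * (t + alpha))).+1.

Definition Ca11_R n t (alpha : nat) (W : WOM n t) (i : nat) : R :=
  let i' := phase t alpha i in
  if (1 <= i' <= t)%N then wR W i'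
  else if (t + alpha + 1 <= i' <= 2 * t + alpha)%N then wR W (i' - t - alpha)
  else R0.

Definition Ca11_E n t (alpha : nat) (W : WOM n t) (i m : nat) (c : cells n)
  : cells n :=
  let i' := phase t alpha i in
  if (1 <= i' <= t)%N then wE W i' m c
  else if i' == t + 1 then ones n
  else if (t + 2 <= i' <= t + alpha)%N then c
  else if (t + alpha + 1 <= i' <= 2 * t + alpha)%N then
    compl (wE W (i' - t - alpha) m (compl c))
  else if i' == 2 * t + alpha + 1 then zeros n
  else c.

(* decoders; writes without information have the single message 1 *)
Definition Ca11_D n t (alpha : nat) (W : WOM n t) (i : nat) (c : cells n) : nat :=
  let i' := phase t alpha i in
  if (1 <= i' <= t)%N then wD W i' c
  else if (t + alpha + 1 <= i' <= 2 * t + alpha)%N then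
    wD W (i' - t - alpha) (compl c)
  else 1.

Definition Ca11 n t (alpha : nat) (W : WOM n t) : code n :=
  MkCode (Ca11_R alpha W) (Ca11_E alpha W) (Ca11_D alpha W).

(** The code alternates an increasing half-period (the t WOM writes, then
    setting every cell to 1, then idling) with a decreasing half-period (the
    t WOM writes on complemented cells, then resetting to 0, then idling).
    Each half is at least alpha writes long, so any alpha consecutive writes
    see each cell move monotonically, hence change at most once.  Decoding is
    inherited from the WOM code, since every WOM write happens in a state
    reachable by the preceding WOM writes.  The rate sequence is periodic of
    period 2(t + alpha) with period sum 2 R_sum, so the average rate tends to
    R_sum / (t + alpha). *)

From Stdlib Require Import Reals Lra.
From mathcomp Require Import all_boot zify.

Set Implicit Arguments.
Unset Strict Implicit.
Unset Printing Implicit Defensive.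

Lemma complK n (c : cells n) : compl (compl c) = c.
Proof. by apply/ffunP => k; rewrite !ffunE negbK. Qed.

Lemma compl_ones n : compl (ones n) = zeros n.
Proof. by apply/ffunP => k; rewrite !ffunE. Qed.

Lemma cle_refl n (c : cells n) : cle c c.
Proof. by apply/forallP => k; rewrite implybb. Qed.

Lemma cle_ones n (c : cells n) : cle c (ones n).
Proof. by apply/forallP => k; rewrite ffunE implybT. Qed.

Lemma cle_zeros n (c : cells n) : cle (zeros n) c.
Proof. by apply/forallP => k; rewrite ffunE. Qed.

Lemma cle_complL n (c d : cells n) : cle (compl c) d -> cle (compl d) c.
Proof.
move=> /forallP cd; apply/forallP => k; move: (cd k); rewrite !ffunE.
by case: (c k); case: (d k).
Qed.

Lemma cle_cellat n (c c' : cells n) j : cle c c' -> cellat c j ==> cellat c' j.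
Proof. by move=> /forallP cc'; rewrite /cellat; case: insub. Qed.

Lemma msize0 n : msize n R0 = 1%N.
Proof.
rewrite /msize Rmult_0_r Rpower_O; last by lra.
by rewrite -(Int_part_spec 1 1%Z) //=; lra.
Qed.

Lemma sum_changes_nondecr (b : nat -> bool) i a :
  (forall k, k < a -> b (i + k) ==> b (i + k).+1) ->
  \sum_(k < a) (b (i + k) != b (i + k).+1) + b i = b (i + a).
Proof.
elim: a => [|a IHa] b_up; first by rewrite big_ord0 addn0.
rewrite big_ord_recr /= -addnA (addnC _ (b i)) addnA IHa; last first.
  by move=> k lt_ka; apply: b_up; lia.
have := b_up a (ltnSn a); rewrite addnS.
by case: (b (i + a)); case: (b (i + a).+1).
Qed.

Lemma sum_changes_monotone_le1 (b : nat -> bool) i a :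
  (forall k, k < a -> b (i + k) ==> b (i + k).+1) \/
  (forall k, k < a -> b (i + k).+1 ==> b (i + k)) ->
  \sum_(k < a) (b (i + k) != b (i + k).+1) <= 1.
Proof.
case=> [b_up | b_down].
  by have := sum_changes_nondecr b_up; case: (b (i + a)); case: (b i); lia.
have nb_up k : k < a -> ~~ b (i + k) ==> ~~ b (i + k).+1.
  by move=> /b_down; case: (b (i + k)); case: (b (i + k).+1).
have := @sum_changes_nondecr (fun x => ~~ b x) i a nb_up.
rewrite (eq_bigr (fun k : 'I_a => b (i + k) != b (i + k).+1 : nat)); last first.
  by move=> k _; case: (b (i + k)); case: (b (i + k).+1).
by case: (b (i + a)); case: (b i) => /=; lia.
Qed.

Lemma modnD_wrap i k d : 0 < d -> k < d ->
  (i + k) %% d = i %% d + k \/ (i + k) %% d + d = i %% d + k.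
Proof.
move=> d_gt0 k_lt; rewrite -modnDml; have := ltn_pmod i d_gt0.
case: (ltnP (i %% d + k) d) => [lt_d _ | ge_d lt_d]; first by left; rewrite modn_small.
right; have -> : i %% d + k = i %% d + k - d + d by lia.
by rewrite modnDr modn_small; lia.
Qed.

Section PeriodicAverages.
Local Open Scope R_scope.

Lemma psum_eq f g m :
  (forall i, (0 < i <= m)%N -> f i = g i) -> psum f m = psum g m.
Proof.
elim: m => [|m IHm] fg //=.
by rewrite IHm => [|i i_m]; rewrite fg //; lia.
Qed.

Lemma psum_add f a b :
  psum f (a + b) = psum f a + psum (fun i => f (a + i)%N) b.
Proof.
elim: b => [|b IHb] /=; first by rewrite addn0; lra.
by rewrite addnS /= IHb; lra.
Qed.

Lemma psum_eq0 f m : (forall i, (0 < i <= m)%N -> f i = 0) -> psum f m = 0.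
Proof.
move=> f0; rewrite (psum_eq (g := fun _ => 0)) //.
by elim: m {f0} => [|m IHm] //=; rewrite IHm; lra.
Qed.

Lemma psum_periodic f P : (forall i, (0 < i)%N -> f (i + P)%N = f i) ->
  forall q r, psum f (q * P + r) = INR q * psum f P + psum f r.
Proof.
move=> f_per; elim=> [|q IHq] r; first by rewrite mul0n add0n /=; lra.
rewrite mulSn -addnA psum_add (psum_eq (g := f)); last first.
  by move=> i /andP [i_gt0 _]; rewrite addnC f_per.
by rewrite IHq S_INR; lra.
Qed.

Lemma Rabs_psum_le f m : Rabs (psum f m) <= psum (fun i => Rabs (f i)) m.
Proof.
elim: m => [|m IHm] /=; first by rewrite Rabs_R0; lra.
by have := Rabs_triang (psum f m) (f m.+1); lra.
Qed.

Lemma psum_le_prefix g r m :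
  (forall i, 0 <= g i) -> (r <= m)%N -> psum g r <= psum g m.
Proof.
move=> g_ge0 /subnKC <-; elim: (m - r)%N => [|d IHd]; first by rewrite addn0; lra.
by rewrite addnS /=; have := g_ge0 (r + d).+1; lra.
Qed.

Lemma Un_cv_dist_le_div u l C :
  (forall m, (0 < m)%N -> Rabs (u m - l) <= C / INR m) -> Un_cv u l.
Proof.
move=> u_near eps eps_gt0.
have C1_gt0 : 0 < Rabs C + 1 by have := Rabs_pos C; lra.
have [N [N_small N_gt0]] := archimed_cor1 (eps / (Rabs C + 1))
  (Rdiv_lt_0_compat _ _ eps_gt0 C1_gt0).
exists N => m m_ge; rewrite /R_dist.
have m_gt0 : (0 < m)%N by apply/ltP; lia.
apply: Rle_lt_trans (u_near m m_gt0) _.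
have N_pos : 0 < INR N by apply: lt_0_INR.
have inv_le : / INR m <= / INR N by apply: Rinv_le_contravar => //; apply: le_INR.
have inv_gt0 : 0 < / INR m by apply: Rinv_0_lt_compat; apply: lt_0_INR; lia.
have epsE : eps / (Rabs C + 1) * (Rabs C + 1) = eps by field; lra.
have C_le := Rle_abs C; have C_ge0 := Rabs_pos C.
rewrite /Rdiv; nra.
Qed.

(* Writing m = qP + r, the deviation from the period mean is
   (psum f r - r S / P) / m, and its numerator is bounded by 2 sum_{i<=P} |f i|. *)
Lemma periodic_mean_cv f P : (0 < P)%N ->
  (forall i, (0 < i)%N -> f (i + P)%N = f i) ->
  Un_cv (fun m => psum f m / INR m) (psum f P / INR P).
Proof.
move=> P_gt0 f_per; set S := psum f P; set B := psum (fun i => Rabs (f i)) P.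
apply: (Un_cv_dist_le_div (C := 2 * B)) => m m_gt0.
have P_pos : 0 < INR P by apply: lt_0_INR; apply/ltP.
have m_pos : 0 < INR m by apply: lt_0_INR; apply/ltP.
have r_lt : (m %% P < P)%N := ltn_pmod m P_gt0.
have mE := divn_eq m P; set q := (m %/ P)%N in mE; set r := (m %% P)%N in mE r_lt.
have mR : INR m = INR q * INR P + INR r by rewrite mE plus_INR mult_INR.
have rP : INR r <= INR P by apply: le_INR; apply/leP; lia.
have r_ge0 := pos_INR r.
have abs_bounds x : Rabs x <= B -> - B <= x <= B.
  by move=> x_le; have := Rle_abs x; have := Rle_abs (- x); rewrite Rabs_Ropp; lra.
have [e_lo e_hi] : - B <= psum f r <= B.
  apply/abs_bounds/(Rle_trans _ _ _ (Rabs_psum_le f r)).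
  by apply: psum_le_prefix; [move=> i; exact: Rabs_pos | lia].
have [S_lo S_hi] : - B <= S <= B by apply/abs_bounds/Rabs_psum_le.
have [ratio_ge0 ratio_le1] : 0 <= INR r / INR P <= 1.
  have invP_gt0 : 0 < / INR P by apply: Rinv_0_lt_compat.
  have PinvP : INR P * / INR P = 1 by apply: Rinv_r; lra.
  by rewrite /Rdiv; split; nra.
have devE : psum f m / INR m - S / INR P =
            (psum f r - INR r / INR P * S) * / INR m.
  by rewrite {1}mE psum_periodic // -/S mR; field; lra.
rewrite devE Rabs_mult Rabs_inv (Rabs_pos_eq (INR m)); last by lra.
apply: Rmult_le_compat_r; first by apply: Rlt_le; apply: Rinv_0_lt_compat.
by apply: Rabs_le; nra.
Qed.

End PeriodicAverages.

Section WOMWrites.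
Variables (n t : nat) (W : WOM n t).
Hypothesis W_WOM : is_WOM W.

Lemma wom_write j c m :
  0 < j <= t -> wom_reach W j c -> 0 < m <= msize n (wR W j) ->
  [/\ wom_reach W j.+1 (wE W j m c), cle c (wE W j m c)
    & wD W j (wE W j m c) = m].
Proof.
move=> j_t c_reach m_ok; have [c_le decode] := proj2 W_WOM j c m j_t c_reach m_ok.
by split=> //; apply: wr_step.
Qed.

Lemma wom_write_compl j c m :
  0 < j <= t -> wom_reach W j (compl c) -> 0 < m <= msize n (wR W j) ->
  [/\ wom_reach W j.+1 (compl (compl (wE W j m (compl c)))),
      cle (compl (wE W j m (compl c))) c
    & wD W j (compl (compl (wE W j m (compl c)))) = m].
Proof.
move=> j_t c_reach m_ok; have [reach le decode] := wom_write j_t c_reach m_ok.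
by rewrite complK; split=> //; apply: cle_complL.
Qed.

End WOMWrites.

Section Construction.
Variables (alpha t n : nat) (W : WOM n t).
Hypotheses (alpha_gt0 : 0 < alpha) (W_WOM : is_WOM W).

Local Notation period := (2 * (t + alpha)).
Local Notation C := (Ca11 alpha W).

Lemma period_gt0 : 0 < period.
Proof. lia. Qed.

Lemma phaseS i : phase t alpha i.+1 = (i %% period).+1.
Proof. by rewrite /phase subSS subn0. Qed.

Lemma phase_small i : 0 < i <= period -> phase t alpha i = i.
Proof. by move=> i_range; rewrite /phase modn_small; lia. Qed.

(* Invariant of the state after q writes of a period, q < period. *)
Definition Ca11_inv (q : nat) (c : cells n) : Prop :=
  if q <= t then wom_reach W q.+1 c
  else if q < t + alpha then c = ones n
  else if q <= 2 * t + alpha then wom_reach W (q - t - alpha).+1 (compl c)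
  else c = zeros n.

Lemma wom_reach_compl_ones : wom_reach W 1 (compl (ones n)).
Proof. by rewrite compl_ones; exact: wr_init. Qed.

Lemma Ca11_write_compl q c m :
  t + alpha <= q < 2 * t + alpha -> wom_reach W (q - t - alpha).+1 (compl c) ->
  0 < m <= msize n (wR W (q.+1 - t - alpha)) ->
  let c' := compl (wE W (q.+1 - t - alpha) m (compl c)) in
  [/\ wom_reach W (q.+1 - t - alpha).+1 (compl c'), cle c' c
    & wD W (q.+1 - t - alpha) (compl c') = m].
Proof.
move=> q_range; rewrite (_ : q.+1 - t - alpha = (q - t - alpha).+1); last by lia.
by apply: wom_write_compl => //; lia.
Qed.

Ltac resolve_ifs := repeat (case: ifP => ?; try (exfalso; lia)).

Ltac position_cases q :=
  (have [?|[?|[?|[?|[?|?]]]]] :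
     q < t \/ q = t \/ t < q < t + alpha \/ t + alpha <= q < 2 * t + alpha \/
     q = 2 * t + alpha \/ 2 * t + alpha < q
     by lia);
  resolve_ifs.

Lemma Ca11_step_inv i m c :
  Ca11_inv (i %% period) c -> 0 < m <= msize n (cR C i.+1) ->
  Ca11_inv (i.+1 %% period) (cE C i.+1 m c).
Proof.
have -> : i.+1 %% period = (i %% period).+1 %% period.
  by rewrite -addn1 -modnDml addn1.
rewrite /= /Ca11_R /Ca11_E !phaseS.
have := ltn_pmod i period_gt0; set q := i %% period => q_lt.
have [q1E | q1_lt] : q.+1 = period \/ q.+1 < period by lia.
  rewrite q1E modnn /Ca11_inv.
  by position_cases q => c_inv _; rewrite ?c_inv; exact: wr_init.
rewrite (modn_small q1_lt) /Ca11_inv; position_cases q => c_inv m_ok //.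
- by case: (wom_write W_WOM _ c_inv m_ok); first lia.
- by rewrite (_ : q.+1 - t - alpha = 0); [exact: wom_reach_compl_ones | lia].
- by rewrite c_inv (_ : q.+1 - t - alpha = 0); [exact: wom_reach_compl_ones | lia].
- by case: (Ca11_write_compl _ c_inv m_ok).
Qed.

Lemma Ca11_step_decode i m c :
  Ca11_inv (i %% period) c -> 0 < m <= msize n (cR C i.+1) ->
  cD C i.+1 (cE C i.+1 m c) = m.
Proof.
rewrite /= /Ca11_R /Ca11_E /Ca11_D !phaseS /Ca11_inv.
have := ltn_pmod i period_gt0; set q := i %% period => q_lt.
position_cases q => c_inv m_ok; rewrite ?msize0 in m_ok; try lia.
- by case: (wom_write W_WOM _ c_inv m_ok); first lia.
- by case: (Ca11_write_compl _ c_inv m_ok).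
Qed.

Lemma Ca11_step_up i m c :
  Ca11_inv (i %% period) c -> 0 < m <= msize n (cR C i.+1) ->
  i %% period < t + alpha \/ 2 * t + alpha < i %% period ->
  cle c (cE C i.+1 m c).
Proof.
rewrite /= /Ca11_R /Ca11_E !phaseS /Ca11_inv; set q := i %% period.
position_cases q => c_inv m_ok q_up; try (exfalso; lia).
- by case: (wom_write W_WOM _ c_inv m_ok); first lia.
- exact: cle_ones.
- exact: cle_refl.
- exact: cle_refl.
Qed.

Lemma Ca11_step_down i m c :
  Ca11_inv (i %% period) c -> 0 < m <= msize n (cR C i.+1) ->
  t < i %% period -> cle (cE C i.+1 m c) c.
Proof.
rewrite /= /Ca11_R /Ca11_E !phaseS /Ca11_inv; set q := i %% period.
position_cases q => c_inv m_ok q_down; try (exfalso; lia).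
- exact: cle_refl.
- by case: (Ca11_write_compl _ c_inv m_ok).
- exact: cle_zeros.
- exact: cle_refl.
Qed.

Lemma Ca11_states_inv ms :
  valid_msgs C ms -> forall i, Ca11_inv (i %% period) (states C ms i).
Proof.
move=> ms_ok; elim=> [|i IHi]; first by rewrite mod0n; exact: wr_init.
exact: Ca11_step_inv IHi (ms_ok _ _).
Qed.

Lemma Ca11_R_ge0 i : Rle R0 (cR C i).
Proof.
rewrite /= /Ca11_R; case: ifP => [i_first | _]; first by apply: (proj1 W_WOM).
case: ifP => [i_second | _]; last exact: Rle_refl.
by apply: (proj1 W_WOM); lia.
Qed.

Lemma Ca11_is_code : is_code C.
Proof.
split=> [i _ | ms ms_ok [//|i] _]; first exact: Ca11_R_ge0.
exact: Ca11_step_decode (Ca11_states_inv ms_ok i) (ms_ok _ _).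
Qed.

Lemma Ca11_constrained : constrained C alpha 1 1.
Proof.
move=> ms ms_ok i j _; set b := fun x => cellat (states C ms x) j.
rewrite (eq_bigr (fun k : 'I_alpha => b (i + k) != b (i + k).+1 : nat)); last first.
  by move=> k _; rewrite big_ord1 addn0.
apply: sum_changes_monotone_le1.
have b_up x : x %% period < t + alpha \/ 2 * t + alpha < x %% period ->
    b x ==> b x.+1.
  move=> x_up; apply: cle_cellat.
  exact: Ca11_step_up (Ca11_states_inv ms_ok x) (ms_ok _ _) x_up.
have b_down x : t < x %% period -> b x.+1 ==> b x.
  move=> x_down; apply: cle_cellat.
  exact: Ca11_step_down (Ca11_states_inv ms_ok x) (ms_ok _ _) x_down.
have wrap k : k < alpha -> (i + k) %% period = i %% period + k \/
                            (i + k) %% period + period = i %% period + k.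
  by move=> k_lt; apply: modnD_wrap; [exact: period_gt0 | lia].
have := ltn_pmod i period_gt0; set q := i %% period => q_lt.
have [q_mid | q_out] := boolP (t < q <= 2 * t + alpha).
- by right=> k k_lt; apply: b_down; case: (wrap k k_lt); lia.
- by left=> k k_lt; apply: b_up; case: (wrap k k_lt); lia.
Qed.

Lemma Ca11_R_periodic i : 0 < i -> cR C (i + period) = cR C i.
Proof.
move=> i_gt0; rewrite /= /Ca11_R /phase.
by rewrite (_ : i + period - 1 = i - 1 + period) ?modnDr //; lia.
Qed.

Lemma Ca11_R_period_sum : psum (cR C) period = Rmult 2 (wom_sumrate W).
Proof.
rewrite (_ : period = t + (alpha + (t + alpha))); last by lia.
rewrite !psum_add /wom_sumrate (psum_eq (g := wR W) (m := t)); last first.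
  by move=> i i_range; rewrite /= /Ca11_R phase_small; [resolve_ifs | lia].
rewrite [psum _ alpha]psum_eq0 => [|i i_range]; last first.
  by rewrite /= /Ca11_R phase_small; [resolve_ifs | lia].
rewrite [psum _ alpha]psum_eq0 => [|i i_range]; last first.
  by rewrite /= /Ca11_R phase_small; [resolve_ifs | lia].
rewrite (psum_eq (g := wR W) (m := t)) /=; first by lra.
move=> i i_range; rewrite /Ca11_R phase_small; last by lia.
by resolve_ifs; congr (wR W _); lia.
Qed.

End Construction.

Theorem theorem6 (alpha t n : nat) (W : WOM n t) :
  (0 < alpha)%N -> (0 < t)%N -> (0 < n)%N -> is_WOM W ->
  (is_code (Ca11 alpha W) /\ constrained (Ca11 alpha W) alpha 1 1) /\
  (wom_sumrate W = log2 (Rplus (INR t) R1) ->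
   code_rate (Ca11 alpha W) (Rdiv (log2 (Rplus (INR t) R1)) (INR (t + alpha)))).
Proof.
move=> alpha_gt0 _ _ W_WOM.
split; first by split; [exact: Ca11_is_code | exact: Ca11_constrained].
move=> optimal.
have := periodic_mean_cv (period_gt0 t alpha_gt0) (Ca11_R_periodic W alpha_gt0).
rewrite (Ca11_R_period_sum W alpha_gt0) optimal.
have ta_pos : Rlt R0 (INR (t + alpha)) by apply: lt_0_INR; apply/ltP; lia.
by rewrite mult_INR /=; congr Un_cv; field; lra.
Qed.
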